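(* Let $\mathfrak l$ be a real nilpotent Lie algebra with $\dim\mathfrak l=5$ and let $\mathfrak a=0$. If $\mathcal H^2_Q(\mathfrak l,\mathfrak a)_0\neq\emptyset$, then $\mathfrak l\cong\mathbb R^5$ or $\mathfrak l\cong\mathfrak g_{5,2}$.
   Context: $\mathfrak g_{5,2}$ has basis $X_1,X_2,X_3,Y,Z$ with $[X_1,X_2]=Y$, $[X_1,X_3]=Z$, other brackets of basis vectors zero; $\mathbb R^5$ is abelian. For a Lie algebra $\mathfrak l$: $\mathfrak l^1=\mathfrak l$, $\mathfrak l^{k+1}=[\mathfrak l,\mathfrak l^k]$, $\mathfrak z(\mathfrak l)$ the centre. For a pseudo-Euclidean space $\mathfrak a$ regarded as trivial $\mathfrak l$-module: $C^p(\mathfrak l,\mathfrak a)$ alternating $p$-linear maps with Chevalley–Eilenberg differential $d$, $C^p(\mathfrak l)=C^p(\mathfrak l,\mathbb R)$, $\langle\alpha\wedge\beta\rangle$ the wedge product followed by contraction with the inner product. $\mathcal Z^2_Q(\mathfrak l,\mathfrak a)=\{(\alpha,\gamma)\in C^2(\mathfrak l,\mathfrak a)\oplus C^3(\mathfrak l): d\alpha=0,d\gamma=\frac12\langle\alpha\wedge\alpha\rangle\}$; the group $C^1(\mathfrak l,\mathfrak a)\oplus C^2(\mathfrak l)$ with $(\tau_1,\sigma_1)*(\tau_2,\sigma_2)=(\tau_1+\tau_2,\sigma_1+\sigma_2+\frac12\langle\tau_1\wedge\tau_2\rangle)$ acts by $(\alpha,\gamma)(\tau,\sigma)=(\alpha+d\tau,\gamma+d\sigma+\langle(\alpha+\frac12d\tau)\wedge\tau\rangle)$;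 $\mathcal H^2_Q(\mathfrak l,\mathfrak a)$ is the orbit set (for $\mathfrak a=0$ it is $H^3(\mathfrak l)$). Admissibility (trivial $\mathfrak a$): with $\mathfrak l^{m+2}=0$, $\mathfrak l_{(0)}=\mathfrak z(\mathfrak l)$, $\mathfrak l_{(k)}=\mathfrak z(\mathfrak l)\cap\mathfrak l^{k+1}$ ($k\ge1$), a class $[\alpha,\gamma]$ is admissible iff for all $0\le k\le m$: $(A_k)$ whenever $L_0\in\mathfrak l_{(k)}$ and there are $A_0\in\mathfrak a$, $Z_0\in(\mathfrak l^{k+1})^*$ with $\alpha(L,L_0)=0$ and $\gamma(L,L_0,\cdot)=-\langle A_0,\alpha(L,\cdot)\rangle+\langle Z_0,[L,\cdot]\rangle$ on $\mathfrak l^{k+1}$ for all $L$, then $L_0=0$; $(B_k)$ $\alpha$ applied to the kernel of the bracket map $\mathfrak l\otimes\mathfrak l^{k+1}\to\mathfrak l$ is a nondegenerate subspace of $\mathfrak a$. A class $\varphi$ is decomposable if there are decompositions $\mathfrak a=\mathfrak a_1\oplus\mathfrak a_2$ (orthogonal, into nondegenerate subspaces) and $\mathfrak l=\mathfrak l_1\oplus\mathfrak l_2$ (Lie algebra direct sum), at least one non-trivial, and classes $\varphi_i\in\mathcal H^2_Q(\mathfrak l_i,\mathfrak a_i)$ with $\varphi=(q_1,j_1)^*\varphi_1+(q_2,j_2)^*\varphi_2$, where $q_i:\mathfrak l\to\mathfrak l_i$ are projections, $j_i:\mathfrak a_i\to\mathfrak a$ inclusions, and $(q,j)^*(\alpha,\gamma)=(j\circ\alpha\circ(q\times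 q),\gamma\circ(q\times q\times q))$ (sums taken on representatives componentwise). $\mathcal H^2_Q(\mathfrak l,\mathfrak a)_0$ is the set of admissible indecomposable classes. *)

From HB Require Import structures.
From mathcomp Require Import all_boot all_order all_algebra.
From mathcomp Require Import reals.
Set Implicit Arguments. Unset Strict Implicit. Unset Printing Implicit Defensive.
Import Order.TTheory GRing.Theory Num.Theory.
Local Open Scope ring_scope.

Section LieDefs.
Variable R : realType.

Definition is_lin (V W : lmodType R) (f : V -> W) :=
  forall (a : R) x y, f (a *: x + y) = a *: f x + f y.

Variable V : vectType R.
Variable br : V -> V -> V.

Definition lie_algebra :=
  [/\ forall a x y z, br (a *: x + y) z = a *: br x z + br y z,
      forall a x y z, br x (a *: y + z) = a *: br x y + br x z,
      forall x, br x x = 0 &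
      forall x y z, br x (br y z) + br y (br z x) + br z (br x y) = 0].

(* lower central series: lcs 1 = l, lcs (k+1) = [l, lcs k] (lcs 0 := l) *)
Fixpoint lcs (k : nat) : {vspace V} :=
  match k with
  | 0 => fullv
  | k'.+1 => match k' with
             | 0 => fullv
             | _ => <<[seq br x y | x <- vbasis (fullv : {vspace V}),
                                    y <- vbasis (lcs k')]>>%VS
             end
  end.

Definition nilpotent := exists n, lcs n = 0%VS.

Definition central (x : V) := forall y, br x y = 0.

Definition form1 (f : V -> R) := forall a x y, f (a *: x + y) = a * f x + f y.

Definition form2 (s : V -> V -> R) :=
  [/\ forall a x y z, s (a *: x + y) z = a * s x z + s y z,
      forall a x y z, s x (a *: y + z) = a * s x y + s x z &
      forall x, s x x = 0].

Definition form3 (g : V -> V -> V -> R) :=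
  [/\ forall a x y z w, g (a *: x + y) z w = a * g x z w + g y z w,
      forall a x y z w, g x (a *: y + z) w = a * g x y w + g x z w,
      forall a x y z w, g x y (a *: z + w) = a * g x y z + g x y w &
      forall x y, g x x y = 0 /\ g x y x = 0 /\ g y x x = 0].

Definition d2 (s : V -> V -> R) (x0 x1 x2 : V) : R :=
  - s (br x0 x1) x2 + s (br x0 x2) x1 - s (br x1 x2) x0.

Definition d3 (g : V -> V -> V -> R) (x0 x1 x2 x3 : V) : R :=
  - g (br x0 x1) x2 x3 + g (br x0 x2) x1 x3 - g (br x0 x3) x1 x2
  - g (br x1 x2) x0 x3 + g (br x1 x3) x0 x2 - g (br x2 x3) x0 x1.

(* for a = 0, a quadratic cocycle (alpha, gamma) is (0, gamma) with gamma a
   closed 3-form *)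
Definition cocycle3 (g : V -> V -> V -> R) :=
  form3 g /\ forall x0 x1 x2 x3, d3 g x0 x1 x2 x3 = 0.

(* admissibility for a = 0: conditions (A_k); (B_k) hold trivially since
   alpha = 0 takes values in the zero space.  l_(k) = z(l) ∩ l^{k+1}
   (for k = 0 this is z(l) as l^1 = l). *)
Definition admissible (g : V -> V -> V -> R) :=
  forall (k : nat) (L0 : V),
    central L0 -> L0 \in lcs k.+1 ->
    (exists Z0 : V -> R, form1 Z0 /\
       forall L X, X \in lcs k.+1 -> g L L0 X = Z0 (br L X)) ->
    L0 = 0.

(* decomposability for a = 0: l = l1 ⊕ l2 a nontrivial Lie algebra direct
   sum (ideals U1, U2), closed 3-forms gamma_i on l_i, and
   [gamma] = q1^*[gamma1] + q2^*[gamma2] in H^3(l). *)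
Definition decomposable (g : V -> V -> V -> R) :=
  exists U1 U2 : {vspace V},
    [/\ U1 != 0%VS, U2 != 0%VS, (U1 :&: U2 = 0)%VS & (U1 + U2 = fullv)%VS] /\
    [/\ (forall x y, x \in U1 -> y \in U1 -> br x y \in U1),
        (forall x y, x \in U2 -> y \in U2 -> br x y \in U2) &
        (forall x y, x \in U1 -> y \in U2 -> br x y = 0)] /\
    exists g1 g2 : V -> V -> V -> R,
      [/\ form3 g1, form3 g2,
          (forall x0 x1 x2 x3, x0 \in U1 -> x1 \in U1 -> x2 \in U1 ->
             x3 \in U1 -> d3 g1 x0 x1 x2 x3 = 0),
          (forall x0 x1 x2 x3, x0 \in U2 -> x1 \in U2 -> x2 \in U2 ->
             x3 \in U2 -> d3 g2 x0 x1 x2 x3 = 0) &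
          exists s : V -> V -> R, form2 s /\
            forall x y z,
              g x y z = g1 (daddv_pi U1 U2 x) (daddv_pi U1 U2 y) (daddv_pi U1 U2 z)
                      + g2 (daddv_pi U2 U1 x) (daddv_pi U2 U1 y) (daddv_pi U2 U1 z)
                      + d2 s x y z].

End LieDefs.

Definition lie_iso (R : realType) (V W : vectType R)
  (brV : V -> V -> V) (brW : W -> W -> W) :=
  exists f : V -> W, [/\ is_lin f, bijective f &
                         forall x y, f (brV x y) = brW (f x) (f y)].

Definition abelian5_br (R : realType) (u v : 'rV[R]_5) : 'rV[R]_5 := 0.

(* g_{5,2}: basis X1,X2,X3,Y,Z = e_0,...,e_4 with [X1,X2]=Y, [X1,X3]=Z *)
Definition g52_br (R : realType) (u v : 'rV[R]_5) : 'rV[R]_5 :=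
  (u 0 0 * v 0 1 - u 0 1 * v 0 0) *: delta_mx 0 3
  + (u 0 0 * v 0 2 - u 0 2 * v 0 0) *: delta_mx 0 4.

(* Let g be an admissible closed 3-form on the 5-dimensional nilpotent Lie
   algebra l, and let l^c be the last nonzero term of the lower central series;
   l^c is central.  Admissibility (A_(c-1)) with Z0 = 0 says that no nonzero
   c0 in l^c satisfies g(., c0, l^c) = 0; since g is alternating this forces
   dim l^c >= 2.  The dimensions of the l^k decrease strictly and
   dim l/l^2 >= 2, so the class is at most 3.  In class 3, l = l^2 + <w1, w2>,
   l^3 is spanned by [w1, W] and [w2, W] with W = [w1, w2], and closedness of g
   gives g(., l^3, l^3) = 0, contradicting admissibility.  Hence l is abelian,
   or 2-step nilpotent with dim [l, l] >= 2; then some [w, u], [w, v] are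
   independent, and after correcting u and v by multiples of w the basis
   w, u, v, [w, u], [w, v] has the brackets of g_{5,2}. *)

From HB Require Import structures.
From mathcomp Require Import all_boot all_order all_algebra.
From mathcomp Require Import reals.
From Stdlib Require Import Classical.
From mathcomp Require Import zify.
Set Implicit Arguments. Unset Strict Implicit. Unset Printing Implicit Defensive.
Import Order.TTheory GRing.Theory Num.Theory.
Local Open Scope ring_scope.

Section LinearAxiom.
Variables (R : pzRingType) (U W : lmodType R) (f : U -> W).
Hypothesis f_lin : forall a x y, f (a *: x + y) = a *: f x + f y.

Let fL : {linear U -> W} := HB.pack f (GRing.isLinear.Build R U W *:%R f f_lin).

Lemma lin_axiom0 : f 0 = 0. Proof. exact: (raddf0 fL). Qed.
Lemma lin_axiomD x y : f (x + y) = f x + f y. Proof. exact: (raddfD fL). Qed.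
Lemma lin_axiomZ a x : f (a *: x) = a *: f x. Proof. exact: (linearZ_LR fL). Qed.
Lemma lin_axiomN x : f (- x) = - f x. Proof. exact: (raddfN fL). Qed.

End LinearAxiom.

Lemma alternating_skew (U W : zmodType) (f : U -> U -> W) :
  (forall x y z, f (x + y) z = f x z + f y z) ->
  (forall x y z, f x (y + z) = f x y + f x z) ->
  (forall x, f x x = 0) -> forall x y, f x y = - f y x.
Proof.
move=> fDl fDr f_xx x y; apply/eqP; rewrite -addr_eq0.
by have := f_xx (x + y); rewrite fDl !fDr !f_xx add0r addr0 => ->.
Qed.

Section VectorFacts.
Variables (K : fieldType) (V : vectType K).

Lemma span_ind (s : seq V) (P : V -> Prop) :
  P 0 -> (forall a u v, P u -> P v -> P (a *: u + v)) ->
  (forall x, x \in s -> P x) -> forall v, v \in <<s>>%VS -> P v.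
Proof.
move=> P0 Plin Ps v /(@coord_span _ _ _ (in_tuple s)) ->.
apply: big_ind => [//| u w Pu Pw | i _].
  by have := Plin 1 u w Pu Pw; rewrite scale1r.
have := Plin (coord (in_tuple s) i v) _ 0 (Ps _ (mem_nth 0 (ltn_ord i))) P0.
by rewrite addr0.
Qed.

Lemma vline_cap (a b z : V) :
  b \notin <[a]>%VS -> z \in <[a]>%VS -> z \in <[b]>%VS -> z = 0.
Proof.
move=> b_a /vlineP [s ->] /vlineP [t zt].
have [t0 | t0] := eqVneq t 0; first by rewrite zt t0 scale0r.
case/negP: b_a; apply/vlineP; exists (s / t).
by rewrite mulrC -scalerA zt scalerA mulVf ?scale1r.
Qed.

Lemma free2P (a b : V) s t :
  free [:: a; b] -> s *: a + t *: b = 0 -> s = 0 /\ t = 0.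
Proof.
rewrite free_cons span_seq1 seq1_free => /andP [a_b b0] E.
have s0 : s = 0.
  apply: contraNeq a_b => s0; apply/vlineP; exists (- t / s).
  move/eqP: E; rewrite addr_eq0 => /eqP sa.
  by rewrite mulrC -scalerA scaleNr -sa scalerA mulVf ?scale1r.
by move: E; rewrite s0 scale0r add0r => /eqP; rewrite scaler_eq0 (negPf b0) orbF => /eqP.
Qed.

Lemma free_span_full n (X : n.-tuple V) :
  \dim {:V} = n -> free X -> <<X>>%VS = fullv.
Proof.
by move=> dimV /eqP dimX; apply/eqP; rewrite eqEdim subvf dimX size_tuple dimV /=.
Qed.

Lemma exists_complement_gens (U : {vspace V}) n :
  (\dim {:V} <= \dim U + n)%N ->
  exists2 ws : seq V, size ws = n & (U + <<ws>>)%VS = fullv.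
Proof.
move=> dimU; pose s : seq V := vbasis U^C.
have size_s : (size s <= n)%N by rewrite size_tuple dimv_compl; lia.
exists (mkseq (nth 0 s) n); first exact: size_mkseq.
apply/eqP; rewrite eqEsubv subvf /=.
rewrite -{1}(addv_complf U) addvS // -(span_basis (vbasisP U^C)).
apply/span_subvP => x /(nthP 0) [i lt_i_s <-].
by apply/memv_span/map_f; rewrite mem_iota add0n (leq_trans lt_i_s).
Qed.

Lemma mem_add2_lines (U : {vspace V}) w1 w2 x :
  x \in (U + <[w1]> + <[w2]>)%VS ->
  exists u a b, u \in U /\ x = u + a *: w1 + b *: w2.
Proof.
case/memv_addP => y /memv_addP [u uU [z /vlineP [a ->] ->]] [_ /vlineP [b ->] ->].
by exists u, a, b.
Qed.

End VectorFacts.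

Section Form3.
Variables (R : realType) (V : vectType R) (g : V -> V -> V -> R).
Hypothesis g_form : form3 g.

Let slot1 y z : V -> R^o := fun x => g x y z.
Let slot2 x z : V -> R^o := fun y => g x y z.
Let slot3 x y : V -> R^o := fun z => g x y z.
Let lin1 y z : forall a x x', slot1 y z (a *: x + x') = a *: slot1 y z x + slot1 y z x'.
Proof. by case: g_form => H _ _ _ a x x'; apply: H. Qed.
Let lin2 x z : forall a y y', slot2 x z (a *: y + y') = a *: slot2 x z y + slot2 x z y'.
Proof. by case: g_form => _ H _ _ a y y'; apply: H. Qed.
Let lin3 x y : forall a z z', slot3 x y (a *: z + z') = a *: slot3 x y z + slot3 x y z'.
Proof. by case: g_form => _ _ H _ a z z'; apply: H. Qed.

Lemma form3_0l y z : g 0 y z = 0. Proof. exact: (lin_axiom0 (lin1 y z)). Qed.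
Lemma form3Dl x x' y z : g (x + x') y z = g x y z + g x' y z.
Proof. exact: (lin_axiomD (lin1 y z)). Qed.
Lemma form3Dm x y y' z : g x (y + y') z = g x y z + g x y' z.
Proof. exact: (lin_axiomD (lin2 x z)). Qed.
Lemma form3Dr x y z z' : g x y (z + z') = g x y z + g x y z'.
Proof. exact: (lin_axiomD (lin3 x y)). Qed.
Lemma form3Zl a x y z : g (a *: x) y z = a * g x y z.
Proof. exact: (lin_axiomZ (lin1 y z)). Qed.
Lemma form3Zm a x y z : g x (a *: y) z = a * g x y z.
Proof. exact: (lin_axiomZ (lin2 x z)). Qed.
Lemma form3Zr a x y z : g x y (a *: z) = a * g x y z.
Proof. exact: (lin_axiomZ (lin3 x y)). Qed.
Lemma form3Nl x y z : g (- x) y z = - g x y z.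
Proof. exact: (lin_axiomN (lin1 y z)). Qed.

Lemma form3_alt12 x y : g x x y = 0. Proof. by case: g_form => _ _ _ /(_ x y) []. Qed.
Lemma form3_alt13 x y : g x y x = 0. Proof. by case: g_form => _ _ _ /(_ x y) [_ []]. Qed.
Lemma form3_alt23 x y : g y x x = 0. Proof. by case: g_form => _ _ _ /(_ x y) [_ []]. Qed.

Lemma form3_swap12 x y z : g x y z = - g y x z.
Proof.
apply: (alternating_skew (f := fun x y => g x y z)) => [? ? ? | ? ? ? | ?].
- exact: form3Dl.
- exact: form3Dm.
- exact: form3_alt12.
Qed.

Lemma form3_swap23 x y z : g x y z = - g x z y.
Proof.
apply: (alternating_skew (f := fun y z => g x y z)) => [? ? ? | ? ? ? | ?].
- exact: form3Dm.
- exact: form3Dr.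
- exact: form3_alt23.
Qed.

Lemma form3_swap13 x y z : g x y z = - g z y x.
Proof. by rewrite form3_swap12 form3_swap23 form3_swap12 !opprK. Qed.

End Form3.

Lemma lie_iso_of_basis (R : realType) (V : vectType R) (br : V -> V -> V) n
    (B : 'rV[R]_n -> 'rV[R]_n -> 'rV[R]_n) (X : n.-tuple V) :
  \dim {:V} = n -> free X ->
  (forall r r' : 'rV[R]_n,
     br (\sum_i r 0 i *: X`_i) (\sum_i r' 0 i *: X`_i) = \sum_i B r r' 0 i *: X`_i) ->
  lie_iso br B.
Proof.
move=> dimV freeX brB.
pose of_row (r : 'rV[R]_n) := \sum_i r 0 i *: X`_i.
pose to_row (x : V) : 'rV[R]_n := \row_i coord X i x.
have to_rowK : cancel to_row of_row.
  move=> x; have := memvf x; rewrite -(free_span_full dimV freeX) => /coord_span {2}->.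
  by apply: eq_bigr => i _; rewrite mxE.
have of_rowK : cancel of_row to_row.
  by move=> r; apply/rowP => i; rewrite mxE coord_sum_free.
exists to_row; split; first by move=> a x y; apply/rowP => i; rewrite !mxE linearP.
  by exists of_row.
by move=> x y; rewrite -{1}(to_rowK x) -{1}(to_rowK y) brB of_rowK.
Qed.

Lemma sum_tuple5 (R : pzRingType) (V : lmodType R) (x0 x1 x2 x3 x4 : V) (k : 'I_5 -> R) :
  \sum_(i < 5) k i *: [tuple x0; x1; x2; x3; x4]`_i
  = k 0 *: x0 + k 1 *: x1 + k 2 *: x2 + k 3 *: x3 + k 4 *: x4.
Proof.
rewrite !big_ord_recl big_ord0 addr0 !addrA.
by do 4?[congr (_ + _)]; congr (k _ *: _); apply: val_inj.
Qed.

Lemma ord5_cases (i : 'I_5) : i = 0 \/ i = 1 \/ i = 2 \/ i = 3 \/ i = 4.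
Proof.
case: i => [[|[|[|[|[|]]]]] // lt_i5];
  by do ?[by left; apply: val_inj | right]; apply: val_inj.
Qed.

Section LieAlgebra.
Variables (R : realType) (V : vectType R) (br : V -> V -> V).
Hypothesis br_lie : lie_algebra br.

Let lin_l z : forall a x y, br (a *: x + y) z = a *: br x z + br y z.
Proof. by case: br_lie => H _ _ _ a x y; apply: H. Qed.
Let lin_r x : forall a y z, br x (a *: y + z) = a *: br x y + br x z.
Proof. by case: br_lie => _ H _ _ a y z; apply: H. Qed.

Lemma br0l z : br 0 z = 0. Proof. exact: (lin_axiom0 (lin_l z)). Qed.
Lemma br0r x : br x 0 = 0. Proof. exact: (lin_axiom0 (lin_r x)). Qed.
Lemma brDl x y z : br (x + y) z = br x z + br y z. Proof. exact: (lin_axiomD (lin_l z)). Qed.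
Lemma brDr x y z : br x (y + z) = br x y + br x z. Proof. exact: (lin_axiomD (lin_r x)). Qed.
Lemma brZl a x z : br (a *: x) z = a *: br x z. Proof. exact: (lin_axiomZ (lin_l z)). Qed.
Lemma brZr a x y : br x (a *: y) = a *: br x y. Proof. exact: (lin_axiomZ (lin_r x)). Qed.
Lemma brxx x : br x x = 0. Proof. by case: br_lie. Qed.
Lemma brC x y : br x y = - br y x. Proof. exact: alternating_skew brDl brDr brxx x y. Qed.

Lemma central_r c : central br c -> forall y, br y c = 0.
Proof. by move=> c_central y; rewrite brC c_central oppr0. Qed.

Lemma br_comb2 a b a' b' w1 w2 :
  br (a *: w1 + b *: w2) (a' *: w1 + b' *: w2) = (a * b' - b * a') *: br w1 w2.
Proof.
rewrite !(brDl, brDr, brZl, brZr) !brxx !scaler0 addr0 add0r (brC w2 w1).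
by rewrite !scalerN !scalerA scalerBl.
Qed.

Lemma lcsSS k :
  lcs br k.+2 = <<[seq br x y | x <- vbasis {:V}, y <- vbasis (lcs br k.+1)]>>%VS.
Proof. by []. Qed.

Lemma lcs_ind k (P : V -> Prop) :
  P 0 -> (forall a u v, P u -> P v -> P (a *: u + v)) ->
  (forall x y, y \in lcs br k.+1 -> P (br x y)) -> forall v, v \in lcs br k.+2 -> P v.
Proof.
move=> P0 Plin Pbr; rewrite lcsSS; apply: span_ind => // _ /allpairsP [[x y] [_ yb ->]].
exact/Pbr/vbasis_mem.
Qed.

Lemma mem_lcs k x y : y \in lcs br k.+1 -> br x y \in lcs br k.+2.
Proof.
move=> y_k; have : x \in <<vbasis {:V}>>%VS by rewrite (span_basis (vbasisP _)) memvf.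
move: x; apply: span_ind => [|a u v u_k v_k|x xb]; first by rewrite br0l mem0v.
  by rewrite lin_l memvD ?memvZ.
have : y \in <<vbasis (lcs br k.+1)>>%VS by rewrite (span_basis (vbasisP _)).
move: y {y_k}; apply: span_ind => [|a u v u_k v_k|y yb]; first by rewrite br0r mem0v.
  by rewrite lin_r memvD ?memvZ.
by rewrite lcsSS memv_span //; apply: allpairs_f.
Qed.

Lemma mem_lcs2 x y : br x y \in lcs br 2.
Proof. exact: (@mem_lcs 0 x y (memvf y)). Qed.

Lemma mem_lcsl k x y : y \in lcs br k.+1 -> br y x \in lcs br k.+2.
Proof. by move=> y_k; rewrite brC memvN mem_lcs. Qed.

Lemma lcsSS_subv k (W : {vspace V}) :
  (forall x y, y \in lcs br k.+1 -> br x y \in W) -> (lcs br k.+2 <= W)%VS.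
Proof.
move=> brW; apply/subvP; apply: lcs_ind => [|a u v uW vW|//]; first exact: mem0v.
by rewrite memvD ?memvZ.
Qed.

Lemma lcs_subS k : (lcs br k.+1 <= lcs br k)%VS.
Proof.
elim: k => [|[|k] IH]; rewrite ?subvf //.
by apply: lcsSS_subv => x y /(subvP IH) /mem_lcs.
Qed.

Lemma lcs_decr m n : (m <= n)%N -> (lcs br n <= lcs br m)%VS.
Proof.
move/subnK <-; elim: (n - m)%N => [|d IH]; first exact: subvv.
exact: subv_trans (lcs_subS _) IH.
Qed.

Lemma lcs_stable k : lcs br k.+2 = lcs br k.+1 ->
  forall n, (k < n)%N -> lcs br n = lcs br k.+1.
Proof.
move=> fixed; elim=> [//|n IH]; rewrite ltnS leq_eqVlt => /orP [/eqP <- // | lt_kn].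
by case: n IH lt_kn => // n IH lt_kn; rewrite lcsSS IH // -lcsSS.
Qed.

Lemma lcs_top_central k c : lcs br k.+2 = 0%VS -> c \in lcs br k.+1 -> central br c.
Proof.
by move=> top c_k y; apply/eqP; rewrite -memv0 -top mem_lcsl.
Qed.

Lemma lcs2_sub_line (w1 w2 : V) :
  (lcs br 2 + <[w1]> + <[w2]>)%VS = fullv ->
  (lcs br 2 <= <[br w1 w2]> + lcs br 3)%VS.
Proof.
move=> gen; apply: (@lcsSS_subv 0) => x y _.
have dec z : exists u a b, u \in lcs br 2 /\ z = u + (a *: w1 + b *: w2).
  have := memvf z; rewrite -gen => /mem_add2_lines [u [a [b [u2 ->]]]].
  by exists u, a, b; rewrite addrA.
have [u [a [b [u2 ->]]]] := dec x; have [u' [a' [b' [u2' ->]]]] := dec y.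
rewrite brDl (brDr u) (brDr (a *: w1 + b *: w2) u') br_comb2 addrA addrC.
apply: memv_add; first exact/rpredZ/memv_line.
by rewrite !rpredD ?(mem_lcs _ u2') ?(mem_lcsl _ u2).
Qed.

Section Nilpotent.
Hypothesis br_nil : nilpotent br.

Lemma lcs_fixed_eq0 k : lcs br k.+2 = lcs br k.+1 -> lcs br k.+1 = 0%VS.
Proof.
move=> fixed; case: br_nil => n lcs_n.
apply/eqP; rewrite -subv0 -lcs_n -(lcs_stable fixed (leq_maxr n k.+1)).
exact/lcs_decr/leq_maxl.
Qed.

Lemma dim_lcs_ltn k : lcs br k.+1 != 0%VS -> (\dim (lcs br k.+2) < \dim (lcs br k.+1))%N.
Proof.
move=> nz; rewrite (ltn_leqif (dimv_leqif_eq (lcs_subS _))).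
by apply: contra nz => /eqP /lcs_fixed_eq0 ->.
Qed.

Lemma dim_lcs_chain i j : (i <= j)%N -> lcs br j.+1 != 0%VS ->
  (\dim (lcs br j.+1) + (j - i) <= \dim (lcs br i.+1))%N.
Proof.
elim: j => [|j IH]; first by rewrite leqn0 => /eqP -> _; rewrite addn0.
rewrite leq_eqVlt => /orP [/eqP -> _ | lt_ij nz]; first by rewrite subnn addn0.
have nz' : lcs br j.+1 != 0%VS.
  by apply: contraNneq nz => lcs_j; rewrite -subv0 -lcs_j lcs_subS.
by have := IH lt_ij nz'; have := dim_lcs_ltn nz'; lia.
Qed.

Lemma lcs_class : fullv != 0%VS :> {vspace V} ->
  exists J, lcs br J.+1 != 0%VS /\ lcs br J.+2 = 0%VS.
Proof.
move=> full_nz; have ex_n : exists n, lcs br n == 0%VS.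
  by case: br_nil => n lcs_n; exists n; rewrite lcs_n.
case: (ex_minnP ex_n) => m /eqP top min_top.
case: m top min_top => [|[|J]] top min_top; try by case/eqP: full_nz.
by exists J; split=> //; apply/negP => /min_top; rewrite ltnn.
Qed.

(* If l = l^2 + <w>, then [l, l] lies in [l, l^2] = l^3. *)
Lemma lcs2_codim : lcs br 2 != 0%VS ->
  (\dim (lcs br 2) + 2 <= \dim {:V})%N.
Proof.
move=> nz2; rewrite leqNgt; apply: contra nz2 => small.
have /exists_complement_gens [[|w [|? ?]] // _ gen] :
  (\dim {:V} <= \dim (lcs br 2) + 1)%N by lia.
have : (lcs br 2 <= lcs br 3)%VS.
  have := @lcs2_sub_line w w; rewrite -addvA addvv -span_seq1 gen brxx => /(_ erefl).
  suff -> : <[0 : V]>%VS = 0%VS by rewrite add0v.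
  by apply/eqP; rewrite -dimv_eq0 dim_vline eqxx.
move=> sub23; have fixed : lcs br 3 = lcs br 2.
  by apply/eqP; rewrite eqEsubv sub23 lcs_subS.
by rewrite (lcs_fixed_eq0 fixed).
Qed.

End Nilpotent.

Section ClosedForm.
Variable g : V -> V -> V -> R.
Hypothesis g_closed : cocycle3 br g.

Let g_form : form3 g. Proof. by case: g_closed. Qed.
Let g_d3 x0 x1 x2 x3 : d3 br g x0 x1 x2 x3 = 0. Proof. by case: g_closed. Qed.

(* Every term of dg(p, q, c, c') except g([p, q], c, c') brackets with c or c'. *)
Lemma closed_form_lcs2_central y c c' :
  y \in lcs br 2 -> central br c -> central br c' -> g y c c' = 0.
Proof.
move=> y2 c_central c'_central; move: y y2.
apply: (@lcs_ind 0) => [|a u v gu gv|p q _].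
- exact: (form3_0l g_form).
- by case: g_form => lin1 _ _ _; rewrite lin1 gu gv mulr0 addr0.
have := g_d3 p q c c'; rewrite /d3 !(central_r c_central) !(central_r c'_central).
rewrite !(form3_0l g_form) !(subr0, addr0) => /eqP.
by rewrite oppr_eq0 => /eqP.
Qed.

Section TwoGenerated.
Variables w1 w2 : V.
Hypothesis gen : (lcs br 2 + <[w1]> + <[w2]>)%VS = fullv.
Hypothesis lcs4 : lcs br 4 = 0%VS.

Local Notation W := (br w1 w2).

Let lcs3_central c : c \in lcs br 3 -> central br c.
Proof. exact: lcs_top_central lcs4. Qed.

Let W2 : W \in lcs br 2. Proof. exact: mem_lcs2. Qed.

Lemma lcs2_decomp y : y \in lcs br 2 -> exists t m, m \in lcs br 3 /\ y = t *: W + m.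
Proof.
move/(subvP (lcs2_sub_line gen)) => /memv_addP [_ /vlineP [t ->] [m m3 ->]].
by exists t, m.
Qed.

Lemma lcs3_sub_lines : (lcs br 3 <= <[br w1 W]> + <[br w2 W]>)%VS.
Proof.
apply: (@lcsSS_subv 1) => x y /lcs2_decomp [t [m [m3 ->]]].
rewrite brDr (central_r (lcs3_central m3)) addr0 brZr memvZ //.
have := memvf x; rewrite -gen.
case/mem_add2_lines=> u [a [b [/lcs2_decomp [s [n [n3 ->]]] ->]]].
rewrite !brDl !brZl brxx (lcs3_central n3) scaler0 !add0r.
by apply: memv_add; apply/rpredZ/memv_line.
Qed.

Lemma closed_form_lcs2_lcs2_lcs3 y y' c :
  y \in lcs br 2 -> y' \in lcs br 2 -> c \in lcs br 3 -> g y y' c = 0.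
Proof.
move=> /lcs2_decomp [t [m [m3 ->]]] /lcs2_decomp [t' [m' [m'3 ->]]] c3.
have vanish z z' : z \in lcs br 2 -> z' \in lcs br 3 -> g z z' c = 0.
  by move=> z2 z'3; apply: closed_form_lcs2_central => //; apply: lcs3_central.
have m2 : m \in lcs br 2 := subvP (lcs_subS 2) m m3.
rewrite !(form3Dl g_form, form3Dm g_form, form3Zl g_form, form3Zm g_form).
rewrite (form3_alt12 g_form) (form3_swap12 g_form m) !vanish //.
by rewrite !(mulr0, oppr0, addr0).
Qed.

Lemma closed_form_bracket_lcs2 p q y :
  y \in lcs br 2 -> g (br p y) q (br q y) = 0.
Proof.
move=> y2; have c3 : br q y \in lcs br 3 := mem_lcs q y2.
have := g_d3 p y q (br q y); rewrite /d3 !(central_r (lcs3_central c3)).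
rewrite (closed_form_lcs2_lcs2_lcs3 (mem_lcs2 p q) y2 c3) (brC y q).
rewrite (form3Nl g_form) (form3_alt13 g_form) !(form3_0l g_form).
by rewrite !(subr0, oppr0, addr0) => /eqP; rewrite oppr_eq0 => /eqP.
Qed.

Lemma closed_form_lcs3 L c c' : c \in lcs br 3 -> c' \in lcs br 3 -> g L c c' = 0.
Proof.
set p1 := br w1 W; set p2 := br w2 W.
have g12 : g L p1 p2 = 0.
  have := memvf L; rewrite -gen => /mem_add2_lines [u [a [b [u2 ->]]]].
  rewrite !(form3Dl g_form, form3Zl g_form) closed_form_lcs2_central //;
    try by apply/lcs3_central/mem_lcs.
  have h1 := closed_form_bracket_lcs2 w2 w1 W2.
  rewrite -/p1 -/p2 (form3_swap13 g_form) (form3_swap12 g_form) opprK in h1.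
  have h2 := closed_form_bracket_lcs2 w1 w2 W2.
  rewrite -/p1 -/p2 (form3_swap12 g_form) in h2.
  move/eqP: h2; rewrite oppr_eq0 => /eqP h2.
  by rewrite h1 h2 !mulr0 !addr0.
move=> /(subvP lcs3_sub_lines) /memv_addP [_ /vlineP [a ->] [_ /vlineP [b ->] ->]].
move=> /(subvP lcs3_sub_lines) /memv_addP [_ /vlineP [a' ->] [_ /vlineP [b' ->] ->]].
rewrite !(form3Dm g_form, form3Dr g_form, form3Zm g_form, form3Zr g_form).
rewrite !(form3_alt23 g_form) (form3_swap23 g_form L p2 p1) g12.
by rewrite !(mulr0, oppr0, addr0).
Qed.

End TwoGenerated.
End ClosedForm.

Section Admissible.
Variable g : V -> V -> V -> R.
Hypotheses (g_form : form3 g) (g_adm : admissible br g).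

Lemma admissible_top_eq0 k c : lcs br k.+2 = 0%VS -> c \in lcs br k.+1 ->
  (forall L X, X \in lcs br k.+1 -> g L c X = 0) -> c = 0.
Proof.
move=> top c_k g_c; apply: (g_adm (lcs_top_central top c_k) c_k).
by exists (fun=> 0); split=> [a x y | L X /g_c ->]; rewrite ?mulr0 ?addr0.
Qed.

Lemma admissible_top_dim k : lcs br k.+2 = 0%VS -> lcs br k.+1 != 0%VS ->
  (2 <= \dim (lcs br k.+1))%N.
Proof.
move=> top nz; rewrite ltnNge; apply/negP => dim1.
have : vpick (lcs br k.+1) != 0 by rewrite vpick0.
move: (vpick _) (memv_pick (lcs br k.+1)) => c cU c_nz.
have c_line : <[c]>%VS = lcs br k.+1.
  rewrite memvE in cU.
  by apply/eqP; rewrite -(geq_leqif (dimv_leqif_eq cU)) dim_vline c_nz.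
case/eqP: c_nz; apply: (admissible_top_eq0 top cU) => L X; rewrite -c_line.
by case/vlineP=> t ->; rewrite (form3Zr g_form) (form3_alt23 g_form) mulr0.
Qed.

End Admissible.

Section Dim5.
Hypothesis dimV : \dim {:V} = 5%N.

Lemma admissible_lcs3_eq0 g :
  nilpotent br -> cocycle3 br g -> admissible br g -> lcs br 3 = 0%VS.
Proof.
move=> br_nil g_closed g_adm; have g_form : form3 g by case: g_closed.
have full_nz : fullv != 0%VS :> {vspace V} by rewrite -dimv_eq0 dimV.
have [[|[|J]] [nz top]] := lcs_class br_nil full_nz.
- by apply/eqP; rewrite -subv0 -top lcs_subS.
- exact: top.
(* For class J + 3 we get J + 3 <= dim l^2 <= 3, so J = 0 and l^2 has
   codimension 2. *)
exfalso; have dimJ := admissible_top_dim g_form g_adm top nz.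
have chain := @dim_lcs_chain br_nil 1 J.+2 isT nz.
have nz2 : lcs br 2 != 0%VS.
  by apply: contraNneq nz => lcs2; rewrite -subv0 -lcs2 lcs_decr.
have codim := lcs2_codim br_nil nz2.
have J0 : J = 0%N by lia.
subst J; have /exists_complement_gens [[|w1 [|w2 [|? ?]]] // _ gen] :
  (\dim {:V} <= \dim (lcs br 2) + 2)%N by lia.
rewrite span_cons span_seq1 addvA in gen.
case/negP: nz; rewrite -subv0; apply/subvP => c c3; rewrite memv0; apply/eqP.
apply: (admissible_top_eq0 g_adm top c3) => L X X3.
exact: (closed_form_lcs3 g_closed gen top).
Qed.

Lemma abelian5_iso : lcs br 2 = 0%VS -> lie_iso br (@abelian5_br R).
Proof.
move=> lcs2; have br0 x y : br x y = 0 by apply/eqP; rewrite -memv0 -lcs2 mem_lcs2.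
pose X := tcast dimV (vbasis {:V}).
have freeX : free X by rewrite val_tcast; exact: basis_free (vbasisP _).
apply: (lie_iso_of_basis dimV freeX) => r r'.
by rewrite br0 big1 // => i _; rewrite mxE scale0r.
Qed.

(* If a = [x, y] <> 0 and b = [p, q] is not in <a>, collinearity forces
   [p, y] = [x, q] = 0, and then [x + p, y] = a and [x + p, q] = b. *)
Lemma collinear_brackets_dim :
  (forall w u v, br w v != 0 -> br w u \in <[br w v]>%VS) ->
  (\dim (lcs br 2) <= 1)%N.
Proof.
move=> collinear.
have collinear_l w u v : br v w != 0 -> br u w \in <[br v w]>%VS.
  move=> vw_nz; have wv_nz : br w v != 0 by rewrite brC oppr_eq0 in vw_nz.
  have /vlineP [t E] := collinear w u v wv_nz.
  by apply/vlineP; exists t; rewrite brC E (brC v) scalerN.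
have [[x [y a_nz]] | all0] := classic (exists x y, br x y != 0); last first.
  suff -> : lcs br 2 = 0%VS by rewrite dimv0.
  apply/eqP; rewrite -subv0; apply: (@lcsSS_subv 0) => x y _.
  by rewrite memv0; apply/negPn/negP => nz; apply: all0; exists x, y.
apply: (@leq_trans (\dim <[br x y]>)); last by rewrite dim_vline a_nz.
apply/dimvS/(@lcsSS_subv 0) => p q _.
apply/negPn/negP => b_out.
have b_nz : br p q != 0 by apply: contraNneq b_out => ->; rewrite mem0v.
have py : br p y = 0 by apply: (vline_cap b_out); [apply: collinear_l | apply: collinear].
have xq : br x q = 0 by apply: (vline_cap b_out); [apply: collinear | apply: collinear_l].
have := collinear (x + p) q y; rewrite !brDl py xq addr0 add0r.
by move/(_ a_nz); apply/negP.
Qed.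

Lemma exists_free_brackets : (2 <= \dim (lcs br 2))%N ->
  exists w u v, free [:: br w u; br w v].
Proof.
move=> dim2; apply: NNPP => no_free; move: dim2; rewrite ltnNge => /negP; apply.
apply: collinear_brackets_dim => w u v wv_nz; apply/negPn/negP => wu_out.
by apply: no_free; exists w, u, v; rewrite free_cons span_seq1 seq1_free wu_out.
Qed.

Section Basis.
Variables w u v c1 c2 : V.
Hypotheses (wu : br w u = c1) (wv : br w v = c2).
Hypotheses (c1_central : central br c1) (c2_central : central br c2).
Hypothesis c12_free : free [:: c1; c2].

Lemma central_coords k0 k1 k2 k3 k4 :
  central br (k0 *: w + k1 *: u + k2 *: v + k3 *: c1 + k4 *: c2) ->
  [/\ k0 = 0, k1 = 0 & k2 = 0].
Proof.
move=> z_central.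
have /(free2P c12_free) [k1_0 k2_0] : k1 *: c1 + k2 *: c2 = 0.
  rewrite -(central_r z_central w) !(brDr, brZr) brxx wu wv.
  by rewrite (central_r c1_central) (central_r c2_central) !scaler0 add0r !addr0.
rewrite k1_0 k2_0 !scale0r !addr0 in z_central.
have /(free2P c12_free) [k0_0 _] : k0 *: c1 + 0 *: c2 = 0.
  rewrite scale0r addr0 -(z_central u) !(brDl, brZl) wu.
  by rewrite c1_central c2_central !scaler0 !addr0.
by [].
Qed.

Lemma free_basis5 : free [:: w; u; v; c1; c2].
Proof.
change (free [tuple w; u; v; c1; c2]); apply/freeP => k; rewrite sum_tuple5 => sum0.
have [k0 k1 k2] : [/\ k 0 = 0, k 1 = 0 & k 2 = 0].
  by apply: (central_coords (k3 := k 3) (k4 := k 4)); rewrite /central sum0; exact: br0l.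
move: sum0; rewrite k0 k1 k2 !scale0r !add0r => /(free2P c12_free) [k3 k4] i.
by case: (ord5_cases i) => [|[|[|[|]]]] ->.
Qed.

Lemma central_sub_lines z : central br z -> z \in (<[c1]> + <[c2]>)%VS.
Proof.
move=> z_central; have := memvf z; rewrite -(free_span_full dimV free_basis5).
move/coord_span; rewrite sum_tuple5 => z_coords; rewrite z_coords in z_central *.
have [-> -> ->] := central_coords z_central; rewrite !scale0r !add0r.
by apply: memv_add; apply/rpredZ/memv_line.
Qed.

Lemma g52_iso_of_basis : br u v = 0 -> lie_iso br (@g52_br R).
Proof.
move=> uv; apply: (lie_iso_of_basis dimV free_basis5) => r r'.
rewrite !sum_tuple5 !(brDl, brDr, brZl, brZr) !brxx.
rewrite wu wv uv (brC u w) (brC v w) (brC v u) wu wv uv.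
rewrite !(central_r c1_central, central_r c2_central, c1_central, c2_central).
rewrite !mxE /= !(mulr0, mulr1, addr0, add0r, scaler0, scale0r).
rewrite oppr0 !scaler0 addr0 !scalerN !scalerA !scalerBl.
by rewrite -!addrA; congr (_ + _); apply: addrCA.
Qed.

End Basis.

Lemma g52_iso : lcs br 3 = 0%VS -> (2 <= \dim (lcs br 2))%N -> lie_iso br (@g52_br R).
Proof.
move=> lcs3 dim2; have [w [u [v c12_free]]] := exists_free_brackets dim2.
have lcs2_central z : z \in lcs br 2 -> central br z := lcs_top_central lcs3.
have c1_central := lcs2_central _ (mem_lcs2 w u).
have c2_central := lcs2_central _ (mem_lcs2 w v).
have := central_sub_lines (erefl _) (erefl _) c1_central c2_central c12_free
  (lcs2_central _ (mem_lcs2 u v)).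
case/memv_addP => _ /vlineP [k1 ->] [_ /vlineP [k2 ->] uv].
apply: (g52_iso_of_basis (w := w) (u := u + (- k2) *: w) (v := v + k1 *: w) _ _
  c1_central c2_central c12_free).
- by rewrite brDr brZr brxx scaler0 addr0.
- by rewrite brDr brZr brxx scaler0 addr0.
rewrite !(brDl, brDr, brZl, brZr) uv (brC u w) brxx !scaler0 addr0 scalerN scaleNr.
by rewrite addrAC addrK subrr.
Qed.

End Dim5.
End LieAlgebra.

Theorem proposition4 (R : realType) (V : vectType R) (br : V -> V -> V) :
  lie_algebra br ->
  \dim (fullv : {vspace V}) = 5%N ->
  nilpotent br ->
  (exists g : V -> V -> V -> R,
      cocycle3 br g /\ admissible br g /\ ~ decomposable br g) ->
  lie_iso br (@abelian5_br R) \/ lie_iso br (@g52_br R).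
Proof.
move=> br_lie dimV br_nil [g [g_closed [g_adm _]]].
have lcs3 := admissible_lcs3_eq0 br_lie dimV br_nil g_closed g_adm.
have [lcs2 | nz2] := eqVneq (lcs br 2) 0%VS; first by left; apply: abelian5_iso.
right; apply: g52_iso => //.
exact: (admissible_top_dim br_lie (proj1 g_closed) g_adm lcs3 nz2).
Qed.
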